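(* Let $r_1,r_2,\mu,a_{12},a_{13},a_{21},a_{31},d$ be positive with $r_1>a_{12}$ and $a_{31}>\mu$, let $c>c_*:=2\sqrt{d(a_{31}-\mu)}$ and $\rho=c^2/d$. Consider the system in $\mathbb{R}^4$ \[ \dot X_1=X_1\big(r_1(1-X_1)-a_{12}X_2-a_{13}Y\big),\quad \dot X_2=X_2\big(r_2(1-X_2)+a_{21}X_1\big),\quad \dot Y=\rho(Y-Z),\quad \dot Z=Y(-\mu+a_{31}X_1), \] with flow $\Phi_t$. Let \[ \sigma_1=\frac{\rho+\sqrt{\rho^2-4\rho(a_{31}-\mu)}}{2\rho},\qquad \sigma_2=\frac{\rho+\sqrt{\rho^2+4\rho\mu}}{2\rho}, \] \[ \Sigma=\Big\{(X_1,X_2,Y,Z):0\le X_1\le1,\ 0\le X_2\le 1+\tfrac{a_{21}}{r_2},\ Y\ge0,\ \sigma_1Y\le Z\le\sigma_2Y\Big\}, \] and let $Q_1,\dots,Q_5\subset\partial\Sigma$ be $Q_1=\Sigma\cap\{X_1=0\}$, $Q_2=\Sigma\cap\{X_1=1\}$, $Q_3=\Sigma\cap\{X_2=0\}$, $Q_4=\Sigma\cap\{X_2=1+a_{21}/r_2\}$, $Q_5=\{0<X_1<1,\ 0<X_2<1+a_{21}/r_2,\ Y=Z=0\}$. Then for any $p$ in the interior of $\Sigma$, the trajectory $\Phi_t(p)$ cannot leave $\Sigma$ through a point of $Q_1\cup Q_2\cup Q_3\cup Q_4\cup Q_5$ at any positive time.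
   Context: This system arises from traveling wave profiles $(U,V,W)(x+ct)$ of the reaction-diffusion system $u_t=r_1u(1-u)-a_{12}uv-a_{13}uw$, $v_t=r_2v(1-v)+a_{21}uv$, $w_t=d w_{xx}-\mu w+a_{31}uw$ via $X_1(t)=U(ct)$, $X_2(t)=V(ct)$, $Y(t)=W(ct)$, $Z(t)=W(ct)-\frac{d}{c}W'(ct)$. For $c>c_*$ one has $0<\sigma_1<1<\sigma_2$. *)

From Stdlib Require Import Reals.
Open Scope R_scope.

Definition rho_of (c d : R) : R := c ^ 2 / d.

Definition sigma1 (rho a31 mu : R) : R :=
  (rho + sqrt (rho ^ 2 - 4 * rho * (a31 - mu))) / (2 * rho).

Definition sigma2 (rho mu : R) : R :=
  (rho + sqrt (rho ^ 2 + 4 * rho * mu)) / (2 * rho).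

(* The closed set Sigma, with K = 1 + a21/r2. *)
Definition Sigma (s1 s2 K : R) (x1 x2 y z : R) : Prop :=
  0 <= x1 <= 1 /\ 0 <= x2 <= K /\ 0 <= y /\ s1 * y <= z <= s2 * y.

Definition interior4 (S : R -> R -> R -> R -> Prop) (x1 x2 y z : R) : Prop :=
  exists e, 0 < e /\
    forall u1 u2 u3 u4,
      Rabs (u1 - x1) < e -> Rabs (u2 - x2) < e ->
      Rabs (u3 - y) < e -> Rabs (u4 - z) < e -> S u1 u2 u3 u4.

Definition InQ (s1 s2 K : R) (x1 x2 y z : R) : Prop :=
  (Sigma s1 s2 K x1 x2 y z /\ x1 = 0) \/
  (Sigma s1 s2 K x1 x2 y z /\ x1 = 1) \/
  (Sigma s1 s2 K x1 x2 y z /\ x2 = 0) \/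
  (Sigma s1 s2 K x1 x2 y z /\ x2 = K) \/
  (0 < x1 < 1 /\ 0 < x2 < K /\ y = 0 /\ z = 0).

(** Each face [Q1], ..., [Q5] lies in the zero set of one of the functions
    [X1], [1 - X1], [X2], [K - X2], [Y], all positive at an interior point.
    While the trajectory stays in [Sigma], the vector field gives
    [f' + M f >= 0] for each of them with a constant [M] (for [Y] this uses
    [Z <= sigma2 Y], for [X1] the boundedness of [Y] on the compact time
    interval), so [f(t) exp(M t)] is nondecreasing and [f] cannot vanish. *)

From Stdlib Require Import Reals Lra.
Open Scope R_scope.

Lemma derivable_pt_lim_exp_scal (M t : R) :
  derivable_pt_lim (fun t => exp (M * t)) t (M * exp (M * t)).
Proof.
  assert (Hlin : derivable_pt_lim (fun t => M * t) t M).
  { pose proof (derivable_pt_lim_scal id M t 1 (derivable_pt_lim_id t)) as H.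
    rewrite Rmult_1_r in H. exact H. }
  rewrite Rmult_comm.
  exact (derivable_pt_lim_comp (fun t => M * t) exp t M (exp (M * t))
           Hlin (derivable_pt_lim_exp _)).
Qed.

Lemma derivable_pt_lim_const_minus (f : R -> R) (a t l : R) :
  derivable_pt_lim f t l -> derivable_pt_lim (fun t => a - f t) t (- l).
Proof.
  intro Hf.
  replace (- l) with (0 - l) by ring.
  exact (derivable_pt_lim_minus (fct_cte a) f t 0 l
           (derivable_pt_lim_const a t) Hf).
Qed.

Section LinearDifferentialInequality.

Variables (f f' : R -> R) (M a b : R).
Hypothesis hab : a < b.
Hypothesis hf : forall t, a <= t <= b -> derivable_pt_lim f t (f' t).
Hypothesis hineq : forall t, a <= t <= b -> 0 <= f' t + M * f t.

Lemma differential_ineq_exp_monotone : f a * exp (M * a) <= f b * exp (M * b).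
Proof.
  destruct (MVT_cor2 (fun t => f t * exp (M * t))
              (fun t => f' t * exp (M * t) + f t * (M * exp (M * t))) a b hab)
    as [c [Hmvt Hc]].
  { intros t Ht.
    exact (derivable_pt_lim_mult f _ t _ _ (hf t Ht) (derivable_pt_lim_exp_scal M t)). }
  assert (Hslope : 0 <= (f' c + M * f c) * exp (M * c)).
  { apply Rmult_le_pos; [apply hineq; lra | left; apply exp_pos]. }
  assert (0 <= (f' c * exp (M * c) + f c * (M * exp (M * c))) * (b - a))
    by (apply Rmult_le_pos; lra).
  lra.
Qed.

Lemma differential_ineq_pos : 0 < f a -> 0 < f b.
Proof.
  intro Ha.
  pose proof differential_ineq_exp_monotone as Hmono.
  assert (0 < f a * exp (M * a)) by (apply Rmult_lt_0_compat; [exact Ha | apply exp_pos]).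
  apply (Rmult_lt_reg_r (exp (M * b))); [apply exp_pos | rewrite Rmult_0_l; lra].
Qed.

End LinearDifferentialInequality.

Lemma interior4_Sigma_strict (s1 s2 K x1 x2 y z : R) :
  interior4 (Sigma s1 s2 K) x1 x2 y z -> 0 < x1 < 1 /\ 0 < x2 < K /\ 0 < y.
Proof.
  intros [e [He Hbox]].
  assert (Hshift : forall u1 u2 u3, Rabs u1 <= e / 2 -> Rabs u2 <= e / 2 ->
            Rabs u3 <= e / 2 -> Sigma s1 s2 K (x1 + u1) (x2 + u2) (y + u3) z).
  { intros u1 u2 u3 H1 H2 H3.
    apply Hbox;
      [ring_simplify (x1 + u1 - x1) | ring_simplify (x2 + u2 - x2) |
       ring_simplify (y + u3 - y) | rewrite Rminus_diag, Rabs_R0]; lra. }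
  assert (Hh : Rabs (e / 2) <= e / 2) by (rewrite Rabs_pos_eq; lra).
  assert (Hmh : Rabs (- (e / 2)) <= e / 2) by (rewrite Rabs_Ropp; lra).
  assert (H0 : Rabs 0 <= e / 2) by (rewrite Rabs_R0; lra).
  destruct (Hshift _ _ _ Hmh H0 H0) as [? _].
  destruct (Hshift _ _ _ Hh H0 H0) as [? _].
  destruct (Hshift _ _ _ H0 Hmh H0) as [_ [? _]].
  destruct (Hshift _ _ _ H0 Hh H0) as [_ [? _]].
  destruct (Hshift _ _ _ H0 H0 Hmh) as [_ [_ [? _]]].
  lra.
Qed.

Section FaceBarriers.

Variables r1 r2 a12 a13 a21 rho s1 s2 K : R.
Hypotheses (hr1 : 0 <= r1) (hr2 : 0 <= r2) (ha12 : 0 <= a12) (ha13 : 0 <= a13)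
  (ha21 : 0 <= a21) (hrho : 0 <= rho) (hK : r2 * K = r2 + a21).

Variables (X1 X2 Y Z : R -> R) (t0 : R).
Hypothesis ht0 : 0 < t0.
Hypothesis hode : forall t, 0 <= t <= t0 ->
  derivable_pt_lim X1 t (X1 t * (r1 * (1 - X1 t) - a12 * X2 t - a13 * Y t)) /\
  derivable_pt_lim X2 t (X2 t * (r2 * (1 - X2 t) + a21 * X1 t)) /\
  derivable_pt_lim Y t (rho * (Y t - Z t)).
Hypothesis hSigma : forall t, 0 <= t <= t0 -> Sigma s1 s2 K (X1 t) (X2 t) (Y t) (Z t).
Hypothesis hstart : 0 < X1 0 < 1 /\ 0 < X2 0 < K /\ 0 < Y 0.

Lemma X1_pos : 0 < X1 t0.
Proof.
  destruct (continuity_ab_maj Y 0 t0) as [tm [Hmax _]]; [lra | |].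
  { intros t Ht. apply derivable_continuous_pt.
    exists (rho * (Y t - Z t)). apply hode, Ht. }
  eapply (differential_ineq_pos X1 _ (a12 * K + a13 * Y tm));
    [exact ht0 | apply hode | | apply hstart].
  intros t Ht. destruct (hSigma t Ht) as (? & ? & ? & _). specialize (Hmax t Ht).
  replace (_ + _ * X1 t) with
    (X1 t * (r1 * (1 - X1 t) + a12 * (K - X2 t) + a13 * (Y tm - Y t))) by ring.
  apply Rmult_le_pos; [lra |].
  assert (0 <= r1 * (1 - X1 t)) by (apply Rmult_le_pos; lra).
  assert (0 <= a12 * (K - X2 t)) by (apply Rmult_le_pos; lra).
  assert (0 <= a13 * (Y tm - Y t)) by (apply Rmult_le_pos; lra).
  lra.
Qed.

Lemma X1_lt_1 : X1 t0 < 1.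
Proof.
  enough (0 < 1 - X1 t0) by lra.
  eapply (differential_ineq_pos (fun t => 1 - X1 t) _ r1);
    [exact ht0 | intros t Ht; apply derivable_pt_lim_const_minus, hode, Ht | |
     cbv beta; lra].
  intros t Ht. destruct (hSigma t Ht) as (? & ? & ? & _).
  replace (_ + r1 * _) with
    (r1 * ((1 - X1 t) * (1 - X1 t)) + X1 t * (a12 * X2 t + a13 * Y t)) by ring.
  assert (0 <= r1 * ((1 - X1 t) * (1 - X1 t))) by (apply Rmult_le_pos; nra).
  assert (0 <= X1 t * (a12 * X2 t + a13 * Y t)) by (apply Rmult_le_pos; nra).
  lra.
Qed.

Lemma X2_pos : 0 < X2 t0.
Proof.
  eapply (differential_ineq_pos X2 _ a21); [exact ht0 | apply hode | | apply hstart].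
  intros t Ht. destruct (hSigma t Ht) as (? & ? & _).
  replace (_ + a21 * X2 t) with
    (X2 t * (r2 * (K - X2 t) + a21 * X1 t)) by (replace a21 with (r2 * K - r2) by lra; ring).
  apply Rmult_le_pos; [lra |].
  assert (0 <= r2 * (K - X2 t)) by (apply Rmult_le_pos; lra).
  assert (0 <= a21 * X1 t) by (apply Rmult_le_pos; lra).
  lra.
Qed.

Lemma X2_lt_K : X2 t0 < K.
Proof.
  enough (0 < K - X2 t0) by lra.
  eapply (differential_ineq_pos (fun t => K - X2 t) _ (r2 * K));
    [exact ht0 | intros t Ht; apply derivable_pt_lim_const_minus, hode, Ht | |
     cbv beta; lra].
  intros t Ht. destruct (hSigma t Ht) as (? & ? & _).
  replace (_ + r2 * K * _) with
    (a21 * X2 t * (1 - X1 t) + r2 * ((K - X2 t) * (K - X2 t)))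
    by (replace a21 with (r2 * K - r2) by lra; ring).
  assert (0 <= a21 * X2 t * (1 - X1 t)) by (apply Rmult_le_pos; nra).
  assert (0 <= r2 * ((K - X2 t) * (K - X2 t))) by (apply Rmult_le_pos; nra).
  lra.
Qed.

Lemma Y_pos : 0 < Y t0.
Proof.
  eapply (differential_ineq_pos Y _ (rho * s2)); [exact ht0 | apply hode | | apply hstart].
  intros t Ht. destruct (hSigma t Ht) as (_ & _ & ? & _ & ?).
  replace (_ + rho * s2 * Y t) with (rho * (Y t + (s2 * Y t - Z t))) by ring.
  apply Rmult_le_pos; lra.
Qed.

Lemma Sigma_trajectory_avoids_faces : ~ InQ s1 s2 K (X1 t0) (X2 t0) (Y t0) (Z t0).
Proof.
  pose proof X1_pos. pose proof X1_lt_1. pose proof X2_pos. pose proof X2_lt_K.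
  pose proof Y_pos.
  intros [[_ ?] | [[_ ?] | [[_ ?] | [[_ ?] | (_ & _ & ? & _)]]]]; lra.
Qed.

End FaceBarriers.

Theorem lemma4 (r1 r2 mu a12 a13 a21 a31 d c : R)
  (hr1 : 0 < r1) (hr2 : 0 < r2) (hmu : 0 < mu) (ha12 : 0 < a12)
  (ha13 : 0 < a13) (ha21 : 0 < a21) (ha31 : 0 < a31) (hd : 0 < d)
  (hc0 : 0 < c) (hr1a12 : r1 > a12) (ha31mu : a31 > mu)
  (hc : c > 2 * sqrt (d * (a31 - mu)))
  (X1 X2 Y Z : R -> R) (T : R) (hT : 0 < T)
  (hode : forall t, 0 <= t < T ->
     derivable_pt_lim X1 t
       (X1 t * (r1 * (1 - X1 t) - a12 * X2 t - a13 * Y t)) /\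
     derivable_pt_lim X2 t (X2 t * (r2 * (1 - X2 t) + a21 * X1 t)) /\
     derivable_pt_lim Y t (rho_of c d * (Y t - Z t)) /\
     derivable_pt_lim Z t (Y t * (- mu + a31 * X1 t)))
  (hp : interior4
          (Sigma (sigma1 (rho_of c d) a31 mu) (sigma2 (rho_of c d) mu)
                 (1 + a21 / r2))
          (X1 0) (X2 0) (Y 0) (Z 0)) :
  forall t0, 0 < t0 < T ->
  ~ ((forall s, 0 <= s <= t0 ->
        Sigma (sigma1 (rho_of c d) a31 mu) (sigma2 (rho_of c d) mu)
              (1 + a21 / r2) (X1 s) (X2 s) (Y s) (Z s)) /\
     InQ (sigma1 (rho_of c d) a31 mu) (sigma2 (rho_of c d) mu)
         (1 + a21 / r2) (X1 t0) (X2 t0) (Y t0) (Z t0) /\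
     (forall eps, 0 < eps -> exists s, t0 < s < t0 + eps /\ s < T /\
        ~ Sigma (sigma1 (rho_of c d) a31 mu) (sigma2 (rho_of c d) mu)
                (1 + a21 / r2) (X1 s) (X2 s) (Y s) (Z s))).
Proof.
  (* Reaching a face is already impossible. *)
  intros t0 Ht0 [Hin [HQ _]].
  assert (Hrho : 0 <= rho_of c d)
    by (unfold rho_of, Rdiv; apply Rmult_le_pos; [nra | left; apply Rinv_0_lt_compat, hd]).
  assert (HK : r2 * (1 + a21 / r2) = r2 + a21) by (field; lra).
  eapply (Sigma_trajectory_avoids_faces r1 r2 a12 a13 a21 (rho_of c d) _ _ _
           ltac:(lra) ltac:(lra) ltac:(lra) ltac:(lra) ltac:(lra) Hrho HK
           X1 X2 Y Z t0 (proj1 Ht0));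
    [| exact Hin | exact (interior4_Sigma_strict _ _ _ _ _ _ _ hp) | exact HQ].
  intros t Ht. destruct (hode t) as (? & ? & ? & _); [lra | auto].
Qed.
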